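(* Let $\mathbf{x}=(\mathbf{x}^1,\dots,\mathbf{x}^n)\in(X_m)^n$ with $\mathbf{x}^j=(x_1^j,\dots,x_m^j)$, let $\mathbf{x}_k=(x_k^1,\dots,x_k^n)$ and $\pi_k(\mathbf{x})=\prod_{j=1}^nx_k^j$ for $k\in[m]$. The product $\mathrm{GL}_m$-geometric crystal structure on $(X_m)^n$ is given by $\gamma(\mathbf{x})=(\pi_1(\mathbf{x}),\dots,\pi_m(\mathbf{x}))$, $\varepsilon_i(\mathbf{x})=\pi_{i+1}(\mathbf{x})/\sigma(\mathbf{x}_i,\mathbf{x}_{i+1})$, $\varphi_i(\mathbf{x})=\pi_i(\mathbf{x})/\sigma(\mathbf{x}_i,\mathbf{x}_{i+1})$, and $e_i^c(\mathbf{x})=\mathbf{x}'$ where $(x')_k^j=\frac{\sigma^j(\mathbf{x}_i,\mathbf{x}_{i+1};c)}{\sigma^{j-1}(\mathbf{x}_i,\mathbf{x}_{i+1};c)}x_i^j$ if $k=i$, $(x')_k^j=\frac{\sigma^{j-1}(\mathbf{x}_i,\mathbf{x}_{i+1};c)}{\sigma^{j}(\mathbf{x}_i,\mathbf{x}_{i+1};c)}x_{i+1}^j$ if $k=i+1$, and $(x')_k^j=x_k^j$ otherwise.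
   Context: The basic $\mathrm{GL}_m$-geometric crystal $X_m=(\mathbb{C}^* )^m$ has, for $\mathbf{y}=(y_1,\dots,y_m)$: $\gamma(\mathbf{y})=\mathbf{y}$, $\varepsilon_i(\mathbf{y})=y_{i+1}$, $\varphi_i(\mathbf{y})=y_i$, $e_i^c(\mathbf{y})=(y_1,\dots,cy_i,c^{-1}y_{i+1},\dots,y_m)$ ($i\in[m-1]$). For geometric crystals $X,X'$ the product structure on $X\times X'$ is $\gamma(x,x')=\gamma(x)\gamma(x')$ (componentwise), $\varepsilon_i(x,x')=\frac{\varepsilon_i(x)\varepsilon_i(x')}{\varepsilon_i(x)+\varphi_i(x')}$, $\varphi_i(x,x')=\frac{\varphi_i(x)\varphi_i(x')}{\varepsilon_i(x)+\varphi_i(x')}$, $e_i^c(x,x')=(e_i^{c^+}(x),e_i^{c/c^+}(x'))$ with $c^+=\frac{c\varphi_i(x')+\varepsilon_i(x)}{\varphi_i(x')+\varepsilon_i(x)}$; this product is associative and $(X_m)^n$ carries the iterated product structure. For $u,v\in(\mathbb{C}^* )^n$, $\sigma^j(u,v;c)=\sum_{r=1}^nc^{\mathbb{1}_{r\le j}}v^1\cdots v^{r-1}u^{r+1}\cdots u^n$ ($j\in[0,n]$) and $\sigma(u,v)=\sigma^j(u,v;1)$. *)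

From HB Require Import structures.
From mathcomp Require Import all_boot all_algebra.
Set Implicit Arguments.
Unset Strict Implicit.
Unset Printing Implicit Defensive.
Import GRing.Theory.
Local Open Scope ring_scope.

Section GeomCrystal.
Variables (F : fieldType) (m : nat).

(* A point of X_m = (F^* )^m : coordinates indexed by 'I_m (0-based). *)
Definition pt := 'I_m -> F.

(* Data of a GL_m-geometric crystal on T: gamma, eps_i, phi_i, e_i^c.
   The crystal index i is 0-based: paper's i in [m-1] corresponds to
   our i with i.+1 < m (coordinates i and i.+1). *)
Record gcrystal (T : Type) := GCrystal {
  gc_gamma : T -> pt;
  gc_eps : nat -> T -> F;
  gc_phi : nat -> T -> F;
  gc_e : nat -> F -> T -> T }.

Definition coord (y : pt) (k : nat) : F :=
  if insub k is Some o then y o else 0.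

Definition Xm : gcrystal pt :=
  @GCrystal pt (fun y => y)
    (fun i y => coord y i.+1)
    (fun i y => coord y i)
    (fun i c y => fun o : 'I_m =>
       if val o == i then c * y o
       else if val o == i.+1 then c^-1 * y o else y o).

Definition prodGC T T' (X : gcrystal T) (X' : gcrystal T') : gcrystal (T * T') :=
  @GCrystal (T * T')
    (fun p => fun k => gc_gamma X p.1 k * gc_gamma X' p.2 k)
    (fun i p => gc_eps X i p.1 * gc_eps X' i p.2
                / (gc_eps X i p.1 + gc_phi X' i p.2))
    (fun i p => gc_phi X i p.1 * gc_phi X' i p.2
                / (gc_eps X i p.1 + gc_phi X' i p.2))
    (fun i c p =>
       let cp := (c * gc_phi X' i p.2 + gc_eps X i p.1)
                 / (gc_phi X' i p.2 + gc_eps X i p.1) in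
       (gc_e X i cp p.1, gc_e X' i (c / cp) p.2)).

(* (X_m)^(n+1), as the left-nested iterated product ((x^1, x^2), ...) *)
Fixpoint powT (n : nat) : Type :=
  match n with 0 => pt | n'.+1 => (powT n' * pt)%type end.

Fixpoint powGC (n : nat) : gcrystal (powT n) :=
  match n return gcrystal (powT n) with
  | 0 => Xm
  | n'.+1 => prodGC (powGC n') Xm
  end.

(* pack x^1 = x 0, ..., x^(n+1) = x n into an element of (X_m)^(n+1) *)
Fixpoint pack (n : nat) (x : nat -> pt) : powT n :=
  match n return powT n with
  | 0 => x 0%N
  | n'.+1 => (pack n' x, x n'.+1)
  end.

(* sigma^j(u, v; c) for u, v of length N (0-based entries u 0, ..., u (N-1)):
   sum_{r=1}^N c^{[r <= j]} v^1...v^{r-1} u^{r+1}...u^N *)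
Definition sigmaj (N : nat) (u v : nat -> F) (j : nat) (c : F) : F :=
  \sum_(r < N) (if (r < j)%N then c else 1)
     * (\prod_(t < r) v t) * (\prod_(r.+1 <= t < N) u t).

Definition sigma (N : nat) (u v : nat -> F) : F := sigmaj N u v 0 1.

Definition xcomp (x : nat -> pt) (k : nat) : nat -> F := fun j => coord (x j) k.

End GeomCrystal.

(* Write u = x_i and v = x_{i+1}. Everything is computed by induction on the
   number of factors: appending a factor y turns σ_N into
   σ_{N+1} = v^1 ⋯ v^N + y_i σ_N, which gives ε and φ. For e, the product rule
   hands the first N factors the parameter c^+ = σ^N_{N+1}(c) / σ_{N+1}; as
   σ^j_N is affine in its parameter, σ^j_N(c^+) = (σ_N / σ_{N+1}) σ^j_{N+1}(c)
   for j <= N, so the ratios σ^{j+1} / σ^j acting on these factors are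
   unchanged, while the last factor receives
   c / c^+ = σ^{N+1}_{N+1}(c) / σ^N_{N+1}(c). *)
From mathcomp Require Import all_boot all_algebra.
From mathcomp Require Import ring.
From Stdlib Require Import FunctionalExtensionality.
Import GRing.Theory.
Local Open Scope ring_scope.

Section Sigma.
Variables (F : fieldType) (u v : nat -> F).
Local Notation vprod N := (\prod_(t < N) v t).

Lemma sigmaj_recr N j c : sigmaj N.+1 u v j c =
  (if (N < j)%N then c else 1) * vprod N + u N * sigmaj N u v j c.
Proof.
rewrite /sigmaj big_ord_recr /= big_geq // mulr1 addrC; congr (_ + _).
rewrite mulr_sumr; apply: eq_bigr => r _.
rewrite big_nat_recr /=; last exact: ltn_ord.
ring.
Qed.

Lemma sigma_recr N : sigma N.+1 u v = vprod N + u N * sigma N u v.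
Proof. by rewrite /sigma sigmaj_recr mul1r. Qed.

Lemma sigmaj_ge N j c : (N <= j)%N -> sigmaj N u v j c = c * sigma N u v.
Proof.
move=> leNj; rewrite /sigma /sigmaj mulr_sumr; apply: eq_bigr => r _.
by rewrite (leq_trans (ltn_ord r) leNj) mul1r !mulrA.
Qed.

Lemma sigmajSn N c : sigmaj N.+1 u v N c = vprod N + u N * (c * sigma N u v).
Proof. by rewrite sigmaj_recr ltnn mul1r sigmaj_ge. Qed.

Lemma sigmaj1 j c : sigmaj 1 u v j c = if (0 < j)%N then c else 1.
Proof. by rewrite /sigmaj big_ord1 big_ord0 big_geq // !mulr1. Qed.

Lemma sigmaj_affine N j c t :
  sigmaj N u v j (1 + t * (c - 1))
  = sigma N u v + t * (sigmaj N u v j c - sigma N u v).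
Proof.
rewrite /sigma /sigmaj -sumrB mulr_sumr -big_split; apply: eq_bigr => r _ /=.
by case: ifP => _; ring.
Qed.

Lemma div_sigma_succ N a w : sigma N u v != 0 -> sigma N.+1 u v != 0 ->
  a / sigma N u v * w / (vprod N / sigma N u v + u N) = a * w / sigma N.+1 u v.
Proof.
rewrite sigma_recr => sN0 sSN0.
by field; rewrite sN0 sSN0.
Qed.

Lemma cplus_sigma N c : sigma N u v != 0 -> sigma N.+1 u v != 0 ->
  (c * u N + vprod N / sigma N u v) / (u N + vprod N / sigma N u v)
  = sigmaj N.+1 u v N c / sigma N.+1 u v.
Proof.
rewrite sigmajSn sigma_recr => sN0 sSN0.
by field; rewrite sN0 sSN0.
Qed.

Lemma sigmaj_at_cplus N j c : (j <= N)%N -> sigma N.+1 u v != 0 ->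
  sigmaj N u v j (sigmaj N.+1 u v N c / sigma N.+1 u v)
  = sigma N u v / sigma N.+1 u v * sigmaj N.+1 u v j c.
Proof.
move=> lejN sSN0.
have -> : sigmaj N.+1 u v N c / sigma N.+1 u v
          = 1 + u N * sigma N u v / sigma N.+1 u v * (c - 1).
  by rewrite sigmajSn; move: sSN0; rewrite sigma_recr => ?; field.
rewrite sigmaj_affine sigmaj_recr ltnNge lejN mul1r.
by move: sSN0; rewrite sigma_recr => ?; field.
Qed.

End Sigma.

Lemma eq_pack (F : fieldType) m n (f g : nat -> pt F m) :
  (forall j, (j <= n)%N -> f j = g j) -> pack n f = pack n g.
Proof.
elim: n => [|n IHn] eq_fg /=; first by rewrite eq_fg.
by rewrite IHn ?eq_fg // => j lejn; rewrite eq_fg // leqW.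
Qed.

Lemma gamma_pack (F : fieldType) m n (x : nat -> pt F m) :
  gc_gamma (powGC F m n) (pack n x) = (fun k : 'I_m => \prod_(j < n.+1) x j k).
Proof.
elim: n => [|n IHn] /=; apply: functional_extensionality => k.
  by rewrite big_ord1.
by rewrite IHn [in RHS]big_ord_recr.
Qed.

Section PowerCrystal.
Variables (F : fieldType) (m : nat) (x : nat -> pt F m) (i : nat).
Local Notation u := (xcomp x i).
Local Notation v := (xcomp x i.+1).

Lemma eps_phi_pack n :
  (forall K, (0 < K <= n.+1)%N -> sigma K u v != 0) ->
  gc_eps (powGC F m n) i (pack n x) = (\prod_(j < n.+1) v j) / sigma n.+1 u v /\
  gc_phi (powGC F m n) i (pack n x) = (\prod_(j < n.+1) u j) / sigma n.+1 u v.
Proof.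
elim: n => [|n IHn] sigma_neq0.
  by rewrite /sigma sigmaj1 !big_ord1 !divr1.
have sn0 : sigma n.+1 u v != 0 by rewrite sigma_neq0 ?leqnSn.
have sSn0 : sigma n.+2 u v != 0 by rewrite sigma_neq0 ?leqnn.
have sigma_neq0' K : (0 < K <= n.+1)%N -> sigma K u v != 0.
  by case/andP=> K0 leKn; rewrite sigma_neq0 // K0 leqW.
rewrite /=; have [-> ->] := IHn sigma_neq0'.
by rewrite !div_sigma_succ //; split; rewrite [in RHS]big_ord_recr.
Qed.

Lemma e_pack n c :
  (forall K, (0 < K <= n.+1)%N -> sigma K u v != 0) ->
  (forall j, (j <= n.+1)%N -> sigmaj n.+1 u v j c != 0) ->
  gc_e (powGC F m n) i c (pack n x)
  = pack n (fun j => gc_e (Xm F m) i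
                       (sigmaj n.+1 u v j.+1 c / sigmaj n.+1 u v j c) (x j)).
Proof.
elim: n c => [|n IHn] c sigma_neq0 sigmaj_neq0.
  by rewrite /= !sigmaj1 divr1.
have sn0 : sigma n.+1 u v != 0 by rewrite sigma_neq0 ?leqnSn.
have sSn0 : sigma n.+2 u v != 0 by rewrite sigma_neq0 ?leqnn.
have sigma_neq0' K : (0 < K <= n.+1)%N -> sigma K u v != 0.
  by case/andP=> K0 leKn; rewrite sigma_neq0 // K0 leqW.
pose cp := sigmaj n.+2 u v n.+1 c / sigma n.+2 u v.
have cpE j : (j <= n.+1)%N ->
    sigmaj n.+1 u v j cp = sigma n.+1 u v / sigma n.+2 u v * sigmaj n.+2 u v j c.
  by move=> lejn; rewrite sigmaj_at_cplus.
have sratio0 : sigma n.+1 u v / sigma n.+2 u v != 0.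
  by rewrite mulf_neq0 ?invr_eq0.
have -> : gc_e (powGC F m n.+1) i c (pack n.+1 x)
          = (gc_e (powGC F m n) i cp (pack n x),
             gc_e (Xm F m) i (c / cp) (x n.+1)).
  rewrite /= (proj1 (eps_phi_pack _ sigma_neq0')).
  by rewrite -/(xcomp x i n.+1) cplus_sigma.
rewrite IHn //; last first.
  by move=> j lejn; rewrite cpE // mulf_neq0 // sigmaj_neq0 // leqW.
congr pair.
  apply: eq_pack => j lejn.
  by rewrite !cpE ?mulrA ?(leq_trans lejn) // invfM mulrACA divff ?mul1r.
by rewrite /cp invf_div mulrA (@sigmaj_ge _ _ _ n.+2 n.+2).
Qed.

End PowerCrystal.

(* The number of factors is n.+1 (n >= 1 in the paper); x^(j+1) = x j. *)
Theorem lemma2p3 (F : fieldType) (m n : nat) (x : nat -> pt F m)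
  (hx : forall (j : nat) (k : 'I_m), (j <= n)%N -> x j k != 0) :
  gc_gamma (powGC F m n) (pack n x) = (fun k : 'I_m => \prod_(j < n.+1) x j k) /\
  (forall i : nat, (i.+1 < m)%N ->
    (forall K : nat, (0 < K <= n.+1)%N ->
       sigma K (xcomp x i) (xcomp x i.+1) != 0) ->
    gc_eps (powGC F m n) i (pack n x)
      = (\prod_(j < n.+1) xcomp x i.+1 j) / sigma n.+1 (xcomp x i) (xcomp x i.+1) /\
    gc_phi (powGC F m n) i (pack n x)
      = (\prod_(j < n.+1) xcomp x i j) / sigma n.+1 (xcomp x i) (xcomp x i.+1) /\
    (forall c : F, c != 0 ->
      (forall j : nat, (j <= n.+1)%N ->
         sigmaj n.+1 (xcomp x i) (xcomp x i.+1) j c != 0) ->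
      gc_e (powGC F m n) i c (pack n x)
        = pack n (fun (j : nat) (k : 'I_m) =>
            if val k == i then
              sigmaj n.+1 (xcomp x i) (xcomp x i.+1) j.+1 c
              / sigmaj n.+1 (xcomp x i) (xcomp x i.+1) j c * x j k
            else if val k == i.+1 then
              sigmaj n.+1 (xcomp x i) (xcomp x i.+1) j c
              / sigmaj n.+1 (xcomp x i) (xcomp x i.+1) j.+1 c * x j k
            else x j k))).
Proof.
split; first exact: gamma_pack.
move=> i _ sigma_neq0.
have [-> ->] := @eps_phi_pack F m x i n sigma_neq0.
do 2!split=> //; move=> c _ sigmaj_neq0.
rewrite e_pack //; apply: eq_pack => j _.
by apply: functional_extensionality => k /=; rewrite invf_div.
Qed.
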